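(* Assume $p,q\in[0,1]$. Let $n\ge3$, and let $v\in I_n$ and $w\in I_{n-1}$ be such that $d_{G_n}(v,w)=3$ and $\alpha_1(w)\cap\alpha_2(v)=\emptyset$ (i.e. $w$ is a distant relative of $v$). Let $(v,w',v',w)$ be a path of length three in $G_n$. Then $v'\in I_n$ and $|\sigma(v')|\ge3$.
   Context: Ulam–Harris labels: $\mathcal U_n=\mathbb N^n$ ($n\ge0$, $\mathcal U_0=\{\emptyset\}$), $\mathcal U=\bigcup_{n\ge0}\mathcal U_n$; for $u=u_1\dots u_k$ write $ui=u_1\dots u_ki$. Let $(\xi_u)_{u\in\mathcal U}$ be i.i.d. Poisson with mean $1+p$, and $(\delta_{u,v})_{u,v\in\mathcal U}$, $(\mu_{\{u,v\}})_{u\ne v\in\mathcal U}$ i.i.d. Bernoulli with mean $q$, all independent. The process $\mathcal G(p,q)=(G_n)_{n\ge0}$, $G_n=(V_n,E_n)$: $G_0=(\{\emptyset\},\emptyset)$, and $I_m=V_m\cap\mathcal U_m$. Given $G_{n-1}$ ($n\ge1$): (1) for $u\in I_{n-1}$ let $\mathcal K_u=\{v\in V_{n-1}:d_{G_{n-1}}(u,v)=3\}$ and $\mathcal C_u=\{j\in\mathbb N:j\le\xi_u,\ \delta_{v,uj}=0\ \forall v\in\mathcal K_u\}$; let $\tilde G_n$ have vertex set $V_{n-1}\cup\{ui:u\in I_{n-1},i\in\mathcal C_u\}$ and edge set $E_{n-1}\cup\{\{u,ui\}:u\in I_{n-1},i\in\mathcal C_u\}$, and $\tilde I_n$ its set of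 vertices in $\mathcal U_n$. (2) For $u,v\in\tilde I_n$ write $u\overset{m}{\sim}v$ iff $d_{\tilde G_n}(u,v)=4$ and $\mu_{\{u,v\}}=1$; let $\sim$ be the equivalence relation on $\tilde I_n$ generated by $\overset m\sim$, and $\pi(u)$ the lexicographically smallest element of the class of $u$. Then $V_n=V_{n-1}\cup\{\pi(u):u\in\tilde I_n\}$, $E_n=E_{n-1}\cup\{\{v,\pi(vi)\}:v\in I_{n-1},i\in\mathcal C_v\}$. For $x\in I_n$, $\alpha(x)=\bigcup_{0\le j\le n}\{y\in I_{n-j}:d_{G_n}(y,x)=j\}$ and $\alpha_i(x)=\alpha(x)\cap I_{n-i}$. For $x\in I_n$, $\sigma(x)=\{\tilde x\in\tilde I_n:\tilde x\sim x\}$ (the set of vertices of $\tilde I_n$ merged into $x$). *)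

From mathcomp Require Import all_boot.
From Stdlib Require Import Relations.
Set Implicit Arguments. Unset Strict Implicit. Unset Printing Implicit Defensive.

(* Ulam--Harris labels: u = u_1 ... u_k is the sequence [:: u_1; ...; u_k];
   generation = size; ui = rcons u i; the root is [::]. *)
Definition label := seq nat.

(* A graph with (possibly infinite-type) vertex and edge predicates.
   gE x y means that the (unordered) edge {x,y} is present. *)
Record graph := Graph { gV : label -> Prop; gE : label -> label -> Prop }.

Definition adj (G : graph) (x y : label) : Prop := gE G x y \/ gE G y x.

Inductive walk (A : label -> label -> Prop) : label -> label -> nat -> Prop :=
| walk0 x : walk A x x 0
| walkS x y z k : A x y -> walk A y z k -> walk A x z k.+1.

Definition dist (G : graph) (x y : label) (k : nat) : Prop :=
  walk (adj G) x y k /\ forall j, j < k -> ~ walk (adj G) x y j.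

Definition gen (G : graph) (m : nat) (x : label) : Prop := gV G x /\ size x = m.

Fixpoint lexle (s t : label) : bool :=
  match s, t with
  | [::], _ => true
  | _ :: _, [::] => false
  | a :: s', b :: t' => (a < b) || ((a == b) && lexle s' t')
  end.

Section Process.
(* a realization of (xi_u), (delta_{u,v}), (mu_{u,v}) *)
Variables (xi : label -> nat) (delta : label -> label -> bool)
          (mu : label -> label -> bool).

(* Everything below builds G_{m+1} from G = G_m (so n = m+1, n-1 = m). *)
Section Step.
Variables (m : nat) (G : graph).

Definition Kset (u v : label) : Prop := gV G v /\ dist G u v 3.

Definition Cset (u : label) (j : nat) : Prop :=
  [/\ 1 <= j, j <= xi u & forall v, Kset u v -> delta v (rcons u j) = false].

Definition tG : graph :=
  Graph (fun x => gV G x \/ exists u j, [/\ gen G m u, Cset u j & x = rcons u j])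
        (fun x y => gE G x y \/ exists u j, [/\ gen G m u, Cset u j, x = u & y = rcons u j]).

Definition tI (x : label) : Prop := gen tG m.+1 x.

Definition mrel (u v : label) : Prop := [/\ tI u, tI v, dist tG u v 4 & mu u v].

Definition sim : label -> label -> Prop := clos_refl_sym_trans label mrel.

Definition pi_rel (u x : label) : Prop :=
  [/\ tI x, sim u x & forall y, tI y -> sim u y -> lexle x y].

Definition step : graph :=
  Graph (fun x => gV G x \/ exists u, tI u /\ pi_rel u x)
        (fun x y => gE G x y \/
           exists v j, [/\ gen G m v, Cset v j, x = v & pi_rel (rcons v j) y]).

Definition sigma (x xt : label) : Prop := tI xt /\ sim xt x.
End Step.

Fixpoint Gproc (n : nat) : graph :=
  match n with
  | 0 => Graph (fun x => x = [::]) (fun _ _ => False)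
  | n'.+1 => step n' (Gproc n')
  end.

Definition alpha_i (k i : nat) (x y : label) : Prop :=
  gen (Gproc k) (k - i) y /\ dist (Gproc k) y x i.
End Process.

From Stdlib Require Import Relations Classical.
From mathcomp Require Import all_boot zify.

(* The path (v, w', v', w) cannot dip to generation n-2: its middle vertex v'
   would then be a parent of w and a grandparent of v, i.e. a common element
   of alpha_1(w) and alpha_2(v).  So v' lies in I_n and is the image of a
   child w'j of w' and of a child wk of w, and w'j <> wk since w' <> w.  If
   the class of w'j under ~ had only these two elements, the chain generating
   w'j ~ wk would reduce to a single step w'j ~m wk; the 4-path in the tree
   between these two leaves then has to turn at a common parent of w' and w,
   which is again a common element of alpha_1(w) and alpha_2(v). *)

Set Implicit Arguments. Unset Strict Implicit. Unset Printing Implicit Defensive.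

Lemma walk0_inv A x y : walk A x y 0 -> x = y.
Proof. by inversion 1. Qed.

Lemma walkS_inv A x z k : walk A x z k.+1 -> exists y, A x y /\ walk A y z k.
Proof. by inversion 1; eauto. Qed.

Lemma adj_sym G x y : adj G x y -> adj G y x.
Proof. by case; [right | left]. Qed.

Definition graded (k : nat) (G : graph) :=
  (forall x, gV G x -> size x <= k) /\
  (forall x y, gE G x y -> [/\ size y = (size x).+1, gV G x & gV G y]).

Section Graded.
Variables (k : nat) (G : graph).
Hypothesis gradedG : graded k G.

Lemma graded_adj x y : adj G x y ->
  [/\ size y = (size x).+1 \/ size x = (size y).+1, gV G x & gV G y].
Proof.
by case=> /gradedG.2 [s gx gy]; split=> //; [left | right].
Qed.

Lemma graded_adj_top x y : size x = k -> adj G x y -> (size y).+1 = k.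
Proof.
move=> sx /graded_adj [[] s _ gy] //; move: (gradedG.1 _ gy); lia.
Qed.

Lemma graded_walk_size x y j : walk (adj G) x y j -> size y <= size x + j.
Proof.
elim=> {x y j} [x | x y z j /graded_adj [s _ _] _ IH]; first by rewrite addn0.
by rewrite addnS; case: s => s; lia.
Qed.

Lemma graded_dist x y j : walk (adj G) x y j -> size y = size x + j -> dist G x y j.
Proof.
move=> W s; split=> // i lt_ij /graded_walk_size; lia.
Qed.

End Graded.

Lemma clos_rst_pair (T : Type) (R : relation T) (a b : T) :
  clos_refl_sym_trans T R a b -> a <> b ->
  (forall c, clos_refl_sym_trans T R c a -> c = a \/ c = b) ->
  R a b \/ R b a.
Proof.
move=> Rab neq_ab class.
have key x y : clos_refl_sym_trans_1n T R x y -> x = a -> y = b -> R a b \/ R b a.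
  elim=> {x y} [x ea eb | x y z Rxy _ IH ex ez]; first by case: neq_ab; rewrite -ea -eb.
  subst.
  have Rya : clos_refl_sym_trans T R y a.
    by case: Rxy => H; [apply: rst_sym | ]; apply: rst_step.
  by case: (class y Rya) => e; subst y; [exact: IH | case: Rxy; [left | right]].
exact: key a b (clos_rst_rst1n _ _ _ _ Rab) erefl erefl.
Qed.

Section Process.
Variables (xi : label -> nat) (delta : label -> label -> bool)
          (mu : label -> label -> bool).

Section Step.
Variables (m : nat) (G : graph).
Hypothesis gradedG : graded m G.

Local Notation tG := (tG xi delta m G).
Local Notation tI := (tI xi delta m G).
Local Notation sim := (sim xi delta mu m G).
Local Notation mrel := (mrel xi delta mu m G).
Local Notation step := (step xi delta mu m G).

Lemma tI_rcons u j : gen G m u -> Cset xi delta G u j -> tI (rcons u j).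
Proof. by move=> gu cu; split; [right; exists u, j | rewrite size_rcons gu.2]. Qed.

Lemma step_graded : graded m.+1 step.
Proof.
split=> [x | x y] /=.
  by case=> [/gradedG.1 | [u [_ [[_ ->] _ _]]]] //; lia.
case=> [/gradedG.2 [s gx gy] | [u [j [gu cj -> py]]]].
  by split=> //; left.
have [[_ sy] _ _] := py.
split; [by rewrite sy gu.2 | by left; case: gu |].
by right; exists (rcons u j); split; first exact: tI_rcons.
Qed.

Lemma step_vertex_old x : gV step x -> size x <> m.+1 -> gV G x.
Proof. by case=> // [[u [_ [[_ sx] _ _]]]]. Qed.

Lemma adj_step_old x y : adj G x y -> adj step x y.
Proof. by case=> H; [left | right]; left. Qed.

Lemma step_adj_old x y : size x <> m.+1 -> size y <> m.+1 -> adj step x y -> adj G x y.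
Proof.
have old_edge a b : size b <> m.+1 -> gE step a b -> gE G a b.
  by move=> sb [// | [u [j [_ _ _ [[_ sb'] _ _]]]]].
by move=> sx sy [H | H]; [left | right]; apply: old_edge H.
Qed.

Lemma step_adj_new x y : size y = m.+1 -> adj step x y ->
  exists j, [/\ gen G m x, Cset xi delta G x j & pi_rel xi delta mu m G (rcons x j) y].
Proof.
move=> sy [[/gradedG.2 [_ _ /gradedG.1] | [u [j [gu cj -> py]]]] | /step_graded.2 [sx _ gx]].
- by rewrite sy ltnn.
- by exists j.
- by move: (step_graded.1 _ gx); rewrite sx sy ltnn.
Qed.

Lemma tG_adj_old x y : size x <> m.+1 -> size y <> m.+1 -> adj tG x y -> adj G x y.
Proof.
move=> sx sy [] [H | [u [j [[_ su] _ _ e]]]].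
- by left.
- by case: sy; rewrite e size_rcons su.
- by right.
- by case: sx; rewrite e size_rcons su.
Qed.

Lemma tG_adj_child x u : size x = m.+1 -> adj tG x u -> exists j, x = rcons u j.
Proof.
move=> sx [] [/gradedG.2 [_ gx gu] | [u' [j [[_ su'] _ ex ->]]]].
- by move: (gradedG.1 _ gx); lia.
- by move: sx; rewrite ex su'; lia.
- by move: (gradedG.1 _ gu); lia.
- by rewrite ex; exists j.
Qed.

(* A leaf's only neighbour is its parent, so the path reads
   rcons p j, p, z, q, rcons q k, and z is no leaf as p <> q. *)
Lemma tG_walk4_common_parent p q j k :
  gen G m p -> gen G m q -> p <> q ->
  walk (adj tG) (rcons p j) (rcons q k) 4 ->
  exists z, [/\ gV G z, (size z).+1 = m, adj G z p & adj G z q].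
Proof.
move=> gp gq neq_pq.
have leaf r i : gen G m r -> size (rcons r i) = m.+1 by move=> [_ sr]; rewrite size_rcons sr.
case/walkS_inv=> x1 [a1 /walkS_inv [x2 [a2 /walkS_inv [x3 [a3
  /walkS_inv [x4 [a4 /walk0_inv e4]]]]]]]; subst x4.
have [j1 /rcons_inj [e1 _]] := tG_adj_child (leaf _ _ gp) a1; subst x1.
have [j3 /rcons_inj [e3 _]] := tG_adj_child (leaf _ _ gq) (adj_sym a4); subst x3.
have [s2 | /eqP s2] := eqVneq (size x2) m.+1.
  have [i2 e2] := tG_adj_child s2 (adj_sym a2).
  have [i3 e3] := tG_adj_child s2 a3.
  by case: neq_pq; move: e3; rewrite e2 => /rcons_inj [].
have [sp sq] : size p <> m.+1 /\ size q <> m.+1 by rewrite gp.2 gq.2; lia.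
have b2 := tG_adj_old sp s2 a2.
have b3 := tG_adj_old s2 sq a3.
have [s _ g2] := graded_adj gradedG b2.
exists x2; split=> //; last exact: adj_sym.
by move: (gradedG.1 _ g2) s; rewrite gp.2; lia.
Qed.

Lemma sim_tI u x : sim u x -> u <> x -> tI u.
Proof.
move=> /(@clos_rst_rst1n label) Sux; elim: Sux => [z /(_ erefl) // | z y _ Hzy _ _ _].
by case: Hzy => -[].
Qed.

Lemma sim_three_or_mrel a b : a <> b -> sim a b ->
  (exists c, [/\ tI c, sim c a, c <> a & c <> b]) \/ mrel a b \/ mrel b a.
Proof.
move=> neq_ab sab.
case: (classic (exists c, [/\ tI c, sim c a, c <> a & c <> b])) => [|none]; first by left.
right; apply: clos_rst_pair => // c sca.
case: (classic (c = a)) => [|nca]; first by left.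
case: (classic (c = b)) => [|ncb]; first by right.
by case: none; exists c; split=> //; apply: sim_tI sca nca.
Qed.

Lemma sim_leaves_three_or_common_parent p q j k :
  gen G m p -> gen G m q -> p <> q -> sim (rcons p j) (rcons q k) ->
  (exists c, [/\ tI c, sim c (rcons p j), c <> rcons p j & c <> rcons q k]) \/
  (exists z, [/\ gV G z, (size z).+1 = m, adj G z p & adj G z q]).
Proof.
move=> gp gq neq_pq spq.
have neq_leaves : rcons p j <> rcons q k by case/rcons_inj.
have [three | mrel_pq] := sim_three_or_mrel neq_leaves spq; first by left.
right; case: mrel_pq => -[_ _ [W _] _]; first exact: tG_walk4_common_parent W.
have [z [gz sz zq zp]] := tG_walk4_common_parent gq gp (nesym neq_pq) W.
by exists z.
Qed.

End Step.

Lemma Gproc_graded k : graded k (Gproc xi delta mu k).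
Proof.
elim: k => [|k IH]; last exact: step_graded.
by split=> [x /= -> | x y []].
Qed.

Lemma common_parent_alpha m v w w' z :
  size v = m.+1 -> size w = m -> gV (Gproc xi delta mu m) z -> (size z).+1 = m ->
  adj (Gproc xi delta mu m) z w ->
  adj (Gproc xi delta mu m.+1) z w' -> adj (Gproc xi delta mu m.+1) w' v ->
  alpha_i xi delta mu m 1 w z /\ alpha_i xi delta mu m.+1 2 v z.
Proof.
move=> sv sw gz sz zw zw' w'v; split; split.
- by split=> //; lia.
- apply: (graded_dist (Gproc_graded m)); last by rewrite sw; lia.
  by apply: walkS zw (walk0 _ _).
- by split; [left | lia].
- apply: (graded_dist (Gproc_graded m.+1)); last by rewrite sv; lia.
  by apply: walkS zw' (walkS w'v (walk0 _ _)).
Qed.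

End Process.

Theorem lemma6p1
  (xi : label -> nat) (delta : label -> label -> bool) (mu : label -> label -> bool)
  (mu_sym : forall u v, mu u v = mu v u)
  (n : nat) (v w w' v' : label) :
  3 <= n ->
  gen (Gproc xi delta mu n) n v ->
  gen (Gproc xi delta mu n) n.-1 w ->
  dist (Gproc xi delta mu n) v w 3 ->
  (forall y, ~ (alpha_i xi delta mu n.-1 1 w y /\ alpha_i xi delta mu n 2 v y)) ->
  adj (Gproc xi delta mu n) v w' ->
  adj (Gproc xi delta mu n) w' v' ->
  adj (Gproc xi delta mu n) v' w ->
  gen (Gproc xi delta mu n) n v' /\
  exists a b c : label,
    [/\ a <> b, a <> c, b <> c &
       [/\ sigma xi delta mu n.-1 (Gproc xi delta mu n.-1) v' a,
           sigma xi delta mu n.-1 (Gproc xi delta mu n.-1) v' b &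
           sigma xi delta mu n.-1 (Gproc xi delta mu n.-1) v' c]].
Proof.
case: n => [|m] // _ /=; set G := Gproc xi delta mu m.
move=> [_ sv] [_ sw] dvw distant vw' w'v' v'w.
have gradedG : graded m G := Gproc_graded xi delta mu m.
have gradedGn : graded m.+1 (step xi delta mu m G) := Gproc_graded xi delta mu m.+1.
have no_common_parent z : gV G z -> (size z).+1 = m -> adj G z w ->
    adj (Gproc xi delta mu m.+1) z w' -> False.
  move=> gz sz zw zw'; apply: (distant z).
  exact: common_parent_alpha sv sw gz sz zw zw' (adj_sym vw').
have sw' : size w' = m := succn_inj (graded_adj_top gradedGn sv vw').
have sv' : size v' = m.+1.
  have [[] s _ gv'] := graded_adj gradedGn w'v'; first by rewrite s sw'.
  have nv' : size v' <> m.+1 by rewrite -sw' s; lia.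
  case: (no_common_parent v').
  - exact: step_vertex_old gv' nv'.
  - by rewrite -sw' s.
  - by apply: (step_adj_old nv' _ v'w); rewrite sw; lia.
  - exact: adj_sym.
split; first by split=> //; case: (graded_adj gradedGn w'v').
have [j [gw' cj [_ sav _]]] := step_adj_new gradedG sv' w'v'.
have [k [gw ck [_ sbv _]]] := step_adj_new gradedG sv' (adj_sym v'w).
have neq_w'w : w' <> w.
  by move=> eq_w'w; apply: (dvw.2 1) => //; rewrite -eq_w'w; apply: walkS vw' (walk0 _ _).
have [[c [tic sca nca ncb]] | [z [gz sz zw' zw]]] := sim_leaves_three_or_common_parent
  gradedG gw' gw neq_w'w (rst_trans _ _ _ _ _ sav (rst_sym _ _ _ _ sbv)).
  exists (rcons w' j), (rcons w k), c.
  split; [by case/rcons_inj | exact: nesym nca | exact: nesym ncb |].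
  split; split=> //; by [apply: tI_rcons | apply: rst_trans sca sav].
by case: (no_common_parent z) => //; apply: adj_step_old.
Qed.
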